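(* For every finite simple graph $G$, $$\alpha_{\mathcal S}(G)=\inf_A\min\big\{W_A(x)\ \big|\ \lambda_{\min}(A)^{-1}\le x\le\lambda_{\max}(A)^{-1}\big\},$$ the infimum taken over all real symmetric weighted adjacency matrices $A$ of $G$.
   Context: $G$ has vertex set $\{1,\dots,n\}$. A weighted adjacency matrix is a real symmetric $A$ with $A_{ii}=0$ and $A_{ij}=0$ for non-adjacent $i\ne j$. $\mathcal S_n=\{\boldsymbol v\in\mathbb R^n:\langle\boldsymbol 1,\boldsymbol v\rangle=|\boldsymbol v|^2\}$ ($\boldsymbol 1$ the all-ones vector), and $\alpha_{\mathcal S}(G)=\inf_A\sup\{|\boldsymbol v|^2:\boldsymbol v\in\mathcal S_n,\ \langle\boldsymbol v,A\boldsymbol v\rangle=0\}$. For $A=\sum_{\lambda\in\sigma(A)}\lambda P_\lambda$, $W_A(x)=\sum_{\lambda\in\sigma(A)}\frac{\langle\boldsymbol 1,P_\lambda\boldsymbol 1\rangle}{1-\lambda x}$, terms with $\langle\boldsymbol 1,P_\lambda\boldsymbol 1\rangle=0$ omitted, and value $+\infty$ at a pole. $\lambda_{\min}(A),\lambda_{\max}(A)$ are the extreme eigenvalues; for $A=0$ the inner minimum is taken to equal $n$. *)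

From HB Require Import structures.
From mathcomp Require Import all_boot all_order all_algebra.
From mathcomp Require Import all_classical all_reals all_analysis.
Set Implicit Arguments. Unset Strict Implicit. Unset Printing Implicit Defensive.
Import Order.TTheory GRing.Theory Num.Theory.
Local Open Scope classical_set_scope.
Local Open Scope ring_scope.

Definition simple_graph (n : nat) (adj : rel 'I_n) : Prop :=
  symmetric adj /\ irreflexive adj.

Definition weighted_adj (R : realType) (n : nat) (adj : rel 'I_n) (A : 'M[R]_n) : Prop :=
  A^T = A /\ (forall i, A i i = 0) /\ (forall i j, i != j -> ~~ adj i j -> A i j = 0).

Definition dotv (R : realType) (n : nat) (u v : 'rV[R]_n) : R := (u *m v^T) 0 0.
Definition onev (R : realType) (n : nat) : 'rV[R]_n := const_mx 1.
Arguments onev {R n}.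

Definition S_set (R : realType) (n : nat) : set 'rV[R]_n :=
  [set v | dotv onev v = dotv v v].
Arguments S_set {R n}.

Definition quadf (R : realType) (n : nat) (A : 'M[R]_n) (v : 'rV[R]_n) : R :=
  dotv v (v *m A^T).

Definition alpha_S (R : realType) (n : nat) (adj : rel 'I_n) : \bar R :=
  ereal_inf [set ereal_sup [set (dotv v v)%:E | v in
                [set v | S_set v /\ quadf A v = 0]]
            | A in [set A : 'M[R]_n | weighted_adj adj A]].

Definition spectrum (R : realType) (n : nat) (A : 'M[R]_n) : set R :=
  [set l | eigenvalue A l].

(* P_lambda: the orthogonal projection onto the eigenspace ker(A - lambda I);
   with B a basis (as rows) of the eigenspace, P = B^T (B B^T)^{-1} B. *)
Definition eigenproj (R : realType) (n : nat) (A : 'M[R]_n) (l : R) : 'M[R]_n :=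
  let B := row_base (eigenspace A l) in B^T *m invmx (B *m B^T) *m B.

Definition wcoef (R : realType) (n : nat) (A : 'M[R]_n) (l : R) : R :=
  dotv onev (onev *m (eigenproj A l)^T).

Definition W_A (R : realType) (n : nat) (A : 'M[R]_n) (x : R) : \bar R :=
  if pselect (exists l, spectrum A l /\ wcoef A l != 0 /\ 1 - l * x = 0)
  then +oo%E
  else (\sum_(l \in [set l | spectrum A l /\ wcoef A l != 0])
          (wcoef A l / (1 - l * x)))%:E.

Definition lam_min (R : realType) (n : nat) (A : 'M[R]_n) : R := inf (spectrum A).
Definition lam_max (R : realType) (n : nat) (A : 'M[R]_n) : R := sup (spectrum A).

Definition inner_min (R : realType) (n : nat) (A : 'M[R]_n) : \bar R :=
  if A == 0 then (n%:R)%:E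
  else ereal_inf [set W_A A x | x in [set x | (lam_min A)^-1 <= x <= (lam_max A)^-1]].

From HB Require Import structures.
From mathcomp Require Import all_boot all_order all_algebra.
From mathcomp Require Import all_classical all_reals all_analysis.
From mathcomp Require Import complex polyrcf ring lra.
Set Implicit Arguments. Unset Strict Implicit. Unset Printing Implicit Defensive.
Import Order.TTheory GRing.Theory Num.Theory.
Local Open Scope classical_set_scope.
Local Open Scope ring_scope.

(* Fix a symmetric [A = \sum_i l_i P_i] (distinct eigenvalues [l_i], orthogonal
   eigenprojections [P_i]), put [w_i = <1, P_i 1>] and [W x = \sum_i w_i / (1 - l_i x)].
   For [x] between [1 / l_min] and [1 / l_max] the pencil [I - x A] is positive
   semidefinite and [z = \sum_i (1 - l_i x)^-1 P_i 1] solves [z (I - x A) = 1], so every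
   [v] in [S_n] with [<v, A v> = 0] satisfies
   [0 <= <(v - z) (I - x A), v - z> = W x - |v|^2].  Conversely [<z A, z> = W' x], so at
   a critical point of [W] the vector [z] itself is feasible with [|z|^2 = W x].  A
   critical point in the interval exists by the intermediate value theorem applied to
   [W'] with its denominators cleared: at the endpoint [1 / l] this polynomial has the
   sign of [l], unless [w = 0] for that eigenvalue and [W'] has the wrong sign, in which
   case adding a multiple of an [l]-eigenvector to [z] attains [W] at the endpoint.
   For [A = 0], [S_n] is the sphere with diameter [[0, 1]], on which [|v|^2 <= n]. *)

Lemma mul_le1_between (R : realFieldType) (a b e x : R) :
  a < 0 -> 0 < b -> a <= e <= b -> a^-1 <= x <= b^-1 -> e * x <= 1.
Proof.
move=> a0 b0 /andP [ae eb] /andP [ax xb].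
have [x0|x0] := leP 0 x.
  apply: le_trans (ler_wpM2r x0 eb) _.
  by rewrite -(mulfV (lt0r_neq0 b0)) ler_wpM2l // ltW.
apply: le_trans (ler_wnM2r (ltW x0) ae) _.
by rewrite -(mulfV (ltr0_neq0 a0)) ler_wnM2l // ltW.
Qed.

Lemma mul_lt1_between (R : realFieldType) (a b e x : R) :
  a < 0 -> 0 < b -> a <= e <= b -> a^-1 < x < b^-1 -> e * x < 1.
Proof.
move=> a0 b0 /andP [ae eb] /andP [ax xb].
have [x0|x0] := leP 0 x.
  apply: le_lt_trans (ler_wpM2r x0 eb) _.
  by rewrite -(mulfV (lt0r_neq0 b0)) ltr_pM2l.
apply: le_lt_trans (ler_wnM2r (ltW x0) ae) _.
by rewrite -(mulfV (ltr0_neq0 a0)) ltr_nM2l.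
Qed.

Section RealClosedLinearAlgebra.
Variable R : rcfType.

(* [dotv] of the statement, over an arbitrary real closed field. *)
Definition vdot n (u v : 'rV[R]_n) : R := (u *m v^T) 0 0.

Definition ones n : 'rV[R]_n := const_mx 1.
Arguments ones {n}.

Lemma vdotC n (u v : 'rV[R]_n) : vdot u v = vdot v u.
Proof. by rewrite /vdot -[v *m u^T]trmxK trmx_mul trmxK [in RHS]mxE. Qed.

Lemma vdotDl n (u v w : 'rV[R]_n) : vdot (u + v) w = vdot u w + vdot v w.
Proof. by rewrite /vdot mulmxDl mxE. Qed.

Lemma vdotZl n a (u w : 'rV[R]_n) : vdot (a *: u) w = a * vdot u w.
Proof. by rewrite /vdot -scalemxAl mxE. Qed.

Lemma vdotBl n (u v w : 'rV[R]_n) : vdot (u - v) w = vdot u w - vdot v w.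
Proof. by rewrite /vdot mulmxBl !mxE. Qed.

Lemma vdot0l n (w : 'rV[R]_n) : vdot 0 w = 0.
Proof. by rewrite /vdot mul0mx mxE. Qed.

Lemma vdot_suml n I (s : seq I) (F : I -> 'rV[R]_n) v :
  vdot (\sum_(i <- s) F i) v = \sum_(i <- s) vdot (F i) v.
Proof. by apply: (big_morph (fun u => vdot u v)) => [x y|]; rewrite ?vdotDl ?vdot0l. Qed.

Lemma vdotDr n (u v w : 'rV[R]_n) : vdot u (v + w) = vdot u v + vdot u w.
Proof. by rewrite vdotC vdotDl !(vdotC _ u). Qed.

Lemma vdotZr n a (u w : 'rV[R]_n) : vdot u (a *: w) = a * vdot u w.
Proof. by rewrite vdotC vdotZl vdotC. Qed.

Lemma vdotBr n (u v w : 'rV[R]_n) : vdot u (v - w) = vdot u v - vdot u w.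
Proof. by rewrite vdotC vdotBl !(vdotC _ u). Qed.

Lemma vdot0r n (w : 'rV[R]_n) : vdot w 0 = 0.
Proof. by rewrite vdotC vdot0l. Qed.

Lemma vdot_sumr n I (s : seq I) (F : I -> 'rV[R]_n) v :
  vdot v (\sum_(i <- s) F i) = \sum_(i <- s) vdot v (F i).
Proof. by rewrite vdotC vdot_suml; apply: eq_bigr => i _; rewrite vdotC. Qed.

Lemma vdot_mulmxl n (M : 'M[R]_n) (u v : 'rV[R]_n) :
  vdot (u *m M) v = vdot u (v *m M^T).
Proof. by rewrite /vdot trmx_mul trmxK mulmxA. Qed.

Lemma mulmx_trmx_eq0 m n (X : 'M[R]_(m, n)) : (X *m X^T == 0) = (X == 0).
Proof.
apply/eqP/eqP => [XX0|->]; last by rewrite mul0mx.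
apply/matrixP => i j; rewrite mxE.
have /matrixP /(_ i i) /eqP := XX0; rewrite !mxE psumr_eq0 => [|k _].
  by move=> /allP /(_ j (mem_index_enum _)); rewrite mxE -expr2 sqrf_eq0 => /eqP.
by rewrite mxE -expr2 sqr_ge0.
Qed.

Lemma vdot_ge0 n (u : 'rV[R]_n) : 0 <= vdot u u.
Proof. by rewrite /vdot mxE; apply: sumr_ge0 => i _; rewrite mxE -expr2 sqr_ge0. Qed.

Lemma vdot_eq0 n (u : 'rV[R]_n) : (vdot u u == 0) = (u == 0).
Proof.
rewrite -mulmx_trmx_eq0 /vdot; apply/eqP/eqP => [uu0|->]; last by rewrite mxE.
by apply/matrixP => i j; rewrite !ord1 [RHS]mxE.
Qed.

Lemma vdot_ones_ones n : vdot (ones : 'rV_n) ones = n%:R.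
Proof.
rewrite /vdot mxE (eq_bigr (fun _ => 1)) => [|i _]; last by rewrite !mxE mulr1.
by rewrite sumr_const card_ord.
Qed.

Lemma vdot_le_dim n (v : 'rV[R]_n) : vdot ones v = vdot v v -> vdot v v <= n%:R.
Proof.
move=> Sv; have := vdot_ge0 (v - ones).
by rewrite vdotBl !vdotBr vdot_ones_ones (vdotC v) Sv; lra.
Qed.

Lemma vdot_delta_mx n (A : 'M[R]_n) i j :
  vdot (delta_mx 0 i *m A) (delta_mx 0 j) = A i j.
Proof. by rewrite /vdot -rowE trmx_delta -colE !mxE. Qed.

Lemma zero_diag_quad_sign n (A : 'M[R]_n) :
  A^T = A -> (forall i, A i i = 0) -> A != 0 ->
  exists u u', 0 < vdot (u *m A) u /\ vdot (u' *m A) u' < 0.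
Proof.
move=> symA diagA A0.
have [i [j Aij]] : exists i j, A i j != 0.
  apply: contra_notP (negP A0) => noA; apply/eqP/matrixP => i j; rewrite mxE.
  by apply: contra_notP noA => Aij; exists i, j; apply/eqP.
have Aji : A j i = A i j by rewrite -{1}symA mxE.
pose up : 'rV[R]_n := delta_mx 0 i + delta_mx 0 j.
pose um : 'rV[R]_n := delta_mx 0 i - delta_mx 0 j.
have qp : vdot (up *m A) up = 2 * A i j.
  by rewrite mulmxDl vdotDl !vdotDr !vdot_delta_mx !diagA Aji; ring.
have qm : vdot (um *m A) um = - (2 * A i j).
  by rewrite mulmxBl vdotBl !vdotBr !vdot_delta_mx !diagA Aji; ring.
have [Apos|Aneg] := ltP 0 (A i j).
  by exists up, um; rewrite qp qm oppr_lt0 mulr_gt0.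
have {}Aneg : A i j < 0 by rewrite lt_neqAle Aij Aneg.
by exists um, up; rewrite qp qm oppr_gt0 !pmulr_rlt0.
Qed.

Definition orthproj k n (B : 'M[R]_(k, n)) : 'M[R]_n :=
  B^T *m invmx (B *m B^T) *m B.

Lemma gram_unitmx k n (B : 'M[R]_(k, n)) : row_free B -> B *m B^T \in unitmx.
Proof.
move=> freeB; rewrite unitmxE unitfE; apply/negP => /det0P [v v0 vBB].
have /eqP : (v *m B) *m (v *m B)^T = 0.
  by rewrite trmx_mul mulmxA -(mulmxA v) vBB mul0mx.
by rewrite mulmx_trmx_eq0 mulmx_free_eq0 // (negbTE v0).
Qed.

Lemma trmx_orthproj k n (B : 'M[R]_(k, n)) : (orthproj B)^T = orthproj B.
Proof. by rewrite /orthproj !trmx_mul trmxK trmx_inv trmx_mul trmxK mulmxA. Qed.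

Lemma orthproj_id k n (B : 'M[R]_(k, n)) p (X : 'M[R]_(p, n)) :
  row_free B -> (X <= B)%MS -> X *m orthproj B = X.
Proof.
move=> freeB /submxP [D ->]; rewrite /orthproj !mulmxA -!(mulmxA D).
by rewrite mulmxV ?gram_unitmx // mul1mx.
Qed.

Lemma orthproj_eq0 k n (B : 'M[R]_(k, n)) p (X : 'M[R]_(p, n)) :
  X *m B^T = 0 -> X *m orthproj B = 0.
Proof. by move=> XB; rewrite /orthproj !mulmxA XB !mul0mx. Qed.

Lemma eigenspace_orth n (A : 'M[R]_n) l m p q (X : 'M[R]_(p, n)) (Y : 'M[R]_(q, n)) :
  A^T = A -> l != m -> (X <= eigenspace A l)%MS -> (Y <= eigenspace A m)%MS ->
  X *m Y^T = 0.
Proof.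
move=> symA lm /eigenspaceP XA /eigenspaceP YA.
have : X *m A *m Y^T = l *: (X *m Y^T) by rewrite XA scalemxAl.
rewrite -mulmxA -{1}symA -trmx_mul YA linearZ /= -scalemxAr => /eqP.
by rewrite -subr_eq0 -scalerBl scaler_eq0 subr_eq0 eq_sym (negbTE lm) => /eqP.
Qed.

Local Notation cRe := (@complex.Re R).
Local Notation cIm := (@complex.Im R).

Lemma map_Re_mulmx m k (y : 'rV[R[i]]_m) (B : 'M[R]_(m, k)) :
  map_mx cRe (y *m map_mx (real_complex R) B) = map_mx cRe y *m B.
Proof.
apply/rowP => j; rewrite !mxE (raddf_sum (cRe : Rcomplex R -> R)).
by apply: eq_bigr => i _; rewrite !mxE; case: (y 0 i) => a b /=; rewrite mulr0 subr0.
Qed.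

Lemma map_Im_mulmx m k (y : 'rV[R[i]]_m) (B : 'M[R]_(m, k)) :
  map_mx cIm (y *m map_mx (real_complex R) B) = map_mx cIm y *m B.
Proof.
apply/rowP => j; rewrite !mxE (raddf_sum (cIm : Rcomplex R -> R)).
by apply: eq_bigr => i _; rewrite !mxE; case: (y 0 i) => a b /=; rewrite mulr0 add0r.
Qed.

Lemma map_Re_scale m (z : R[i]) (y : 'rV[R[i]]_m) :
  map_mx cRe (z *: y) = cRe z *: map_mx cRe y - cIm z *: map_mx cIm y.
Proof. by apply/rowP => j; rewrite !mxE; case: z; case: (y 0 j). Qed.

Lemma map_Im_scale m (z : R[i]) (y : 'rV[R[i]]_m) :
  map_mx cIm (z *: y) = cIm z *: map_mx cRe y + cRe z *: map_mx cIm y.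
Proof. by apply/rowP => j; rewrite !mxE; case: z; case: (y 0 j) => a b c d /=; rewrite addrC. Qed.

Lemma map_ReIm_eq0 m (y : 'rV[R[i]]_m) :
  map_mx cRe y = 0 -> map_mx cIm y = 0 -> y = 0.
Proof.
move=> /rowP Re0 /rowP Im0; apply/rowP => j.
by move: (Re0 j) (Im0 j); rewrite !mxE; case: (y 0 j) => a b /= -> ->.
Qed.

Lemma symmetric_rotation_eq0 n (A : 'M[R]_n) (x1 x2 : 'rV[R]_n) a b :
  A^T = A -> x1 *m A = a *: x1 - b *: x2 -> x2 *m A = b *: x1 + a *: x2 ->
  b * (vdot x1 x1 + vdot x2 x2) = 0.
Proof.
move=> symA x1A x2A; have := vdot_mulmxl A x1 x2.
rewrite symA x1A x2A vdotBl vdotDr !vdotZl !vdotZr => E.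
rewrite (_ : b * _ = b * vdot x1 x1 + a * vdot x1 x2 - (a * vdot x1 x2 - b * vdot x2 x2)).
  by rewrite E subrr.
by ring.
Qed.

(* Take a complex eigenvector of [A] restricted to [K]; symmetry makes the eigenvalue real,
   so its real or imaginary part is a real eigenvector in [K]. *)
Lemma stable_eigenvector n (A : 'M[R]_n) m (K : 'M[R]_(m, n)) :
  A^T = A -> (0 < \rank K)%N -> (K *m A <= K)%MS ->
  exists a (x : 'rV[R]_n), [/\ x != 0, (x <= K)%MS & x *m A = a *: x].
Proof.
move=> symA rK KA; set Rb := row_base K.
have freeRb : row_free Rb := row_base_free K.
have RbK : (Rb <= K)%MS by rewrite eq_row_base.
pose B := Rb *m A *m pinvmx Rb.
have BRb : B *m Rb = Rb *m A.
  by rewrite mulmxKpV // eq_row_base (submx_trans _ KA) // submxMr.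
have [lam /eigenvalueP [y yB y0]] := eigenvalue_closed (map_mx (real_complex R) B) rK.
pose x1 := map_mx cRe y *m Rb; pose x2 := map_mx cIm y *m Rb.
have x1A : x1 *m A = cRe lam *: x1 - cIm lam *: x2.
  by rewrite -mulmxA -BRb mulmxA -map_Re_mulmx yB map_Re_scale mulmxBl -!scalemxAl.
have x2A : x2 *m A = cIm lam *: x1 + cRe lam *: x2.
  by rewrite -mulmxA -BRb mulmxA -map_Im_mulmx yB map_Im_scale mulmxDl -!scalemxAl.
have x12 : (x1 != 0) || (x2 != 0).
  rewrite !mulmx_free_eq0 //; apply: contraR y0 => /norP [/negPn/eqP Re0 /negPn/eqP Im0].
  by rewrite (map_ReIm_eq0 Re0 Im0).
have Im0 : cIm lam = 0.
  apply/eqP; have /eqP := symmetric_rotation_eq0 symA x1A x2A.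
  rewrite mulf_eq0 paddr_eq0 ?vdot_ge0 // !vdot_eq0 => /orP [//|/andP [x10 x20]].
  by move: x12; rewrite x10 x20.
have xK x : (x *m Rb <= K)%MS by apply: submx_trans (submxMl _ _) RbK.
case/orP: x12 => [x10|x20]; exists (cRe lam).
  by exists x1; split; rewrite ?xK // x1A Im0 scale0r subr0.
by exists x2; split; rewrite ?xK // x2A Im0 scale0r add0r.
Qed.

End RealClosedLinearAlgebra.
Arguments ones {R n}.

Lemma horner_sqr_linear (R : comNzRingType) (c x : R) :
  ((1 - c *: 'X) ^+ 2).[x] = (1 - c * x) ^+ 2.
Proof. by rewrite !hornerE. Qed.

Section SymmetricMatrix.
Variables (R : rcfType) (n : nat) (A : 'M[R]_n).
Hypothesis symA : A^T = A.

Definition eigs : seq R := rootsR (char_poly A).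
Local Notation r := (size eigs).

Definition eig (i : 'I_r) : R := eigs`_i.

(* Convertible to [eigenproj A (eig i)] of the statement. *)
Definition eigproj (i : 'I_r) : 'M[R]_n :=
  orthproj (row_base (eigenspace A (eig i))).

Local Notation E i := (eigenspace A (eig i)).

Lemma mem_eigs l : (l \in eigs) = eigenvalue A l.
Proof.
rewrite eigenvalue_root_char.
by have := roots_on_rootsR (monic_neq0 (char_poly_monic A)) l; rewrite in_itv.
Qed.

Lemma eig_inj : injective eig.
Proof. by move=> i j /eqP; rewrite nth_uniq ?uniq_roots // => /eqP /val_inj. Qed.

Lemma eigenvalue_eig i : eigenvalue A (eig i).
Proof. by rewrite -mem_eigs mem_nth. Qed.

Lemma eigenvalue_eigP l : eigenvalue A l -> exists i, l = eig i.
Proof.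
rewrite -mem_eigs => l_eig; exists (Ordinal (etrans (index_mem l eigs) l_eig)).
by rewrite /eig nth_index.
Qed.

Lemma eigproj_sub i : (eigproj i <= E i)%MS.
Proof. by apply: submx_trans (submxMl _ _) _; rewrite eq_row_base. Qed.

Lemma trmx_eigproj i : (eigproj i)^T = eigproj i.
Proof. exact: trmx_orthproj. Qed.

Lemma eigproj_id i p (X : 'M[R]_(p, n)) : (X <= E i)%MS -> X *m eigproj i = X.
Proof. by move=> XE; rewrite orthproj_id ?row_base_free ?eq_row_base. Qed.

Lemma eigproj_eq0 i j p (X : 'M[R]_(p, n)) :
  i != j -> (X <= E i)%MS -> X *m eigproj j = 0.
Proof.
move=> ij XE; apply: orthproj_eq0; apply: (eigenspace_orth symA _ XE).
  by apply: contra ij => /eqP /eig_inj ->.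
by rewrite eq_row_base.
Qed.

Lemma eigprojM i j : eigproj i *m eigproj j = if i == j then eigproj i else 0.
Proof.
case: eqP => [<-|/eqP ij]; first exact: eigproj_id (eigproj_sub i).
exact: eigproj_eq0 ij (eigproj_sub i).
Qed.

Lemma eigprojA i : eigproj i *m A = eig i *: eigproj i.
Proof. exact/eigenspaceP/eigproj_sub. Qed.

(* The orthogonal complement of the sum of the eigenspaces is [A]-stable, so it
   would contain a further eigenvector if it were nonzero. *)
Lemma eigenspaces_full : (1%:M <= \sum_i E i)%MS.
Proof.
set W := (\sum_i E i)%MS.
have [fullW|nfullW] := boolP (row_full W); first exact: submx_full.
exfalso; set K := kermx W^T.
have rK : (0 < \rank K)%N.
  by rewrite mxrank_ker mxrank_tr subn_gt0 ltn_neqAle rank_leq_col andbT.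
have /submxP [D WA] : (W *m A <= W)%MS.
  rewrite (sumsmxMr _ _ A); apply: sumsmxS => i _.
  by rewrite (eigenspaceP (submx_refl (E i))) scalemx_sub.
have KA : (K *m A <= K)%MS.
  rewrite sub_kermx -mulmxA -{1}symA -trmx_mul WA trmx_mul mulmxA mulmx_ker.
  by rewrite mul0mx.
have [a [x [x0 xK xA]]] := stable_eigenvector symA rK KA.
have [i ai] : exists i, a = eig i by apply/eigenvalue_eigP/eigenvalueP; exists x.
have /submxP [d xW] : (x <= W)%MS.
  by apply: (sumsmx_sup i) => //; apply/eigenspaceP; rewrite -ai.
have /submxP [c xc] := xK.
have /eqP : x *m x^T = 0.
  by rewrite {2}xW trmx_mul {1}xc mulmxA -(mulmxA c) mulmx_ker mulmx0 mul0mx.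
by rewrite mulmx_trmx_eq0 (negbTE x0).
Qed.

Lemma sum_eigproj : \sum_i eigproj i = 1%:M.
Proof.
have /sub_sumsmxP [u ue] := eigenspaces_full.
rewrite -[LHS]mul1mx {1}ue mulmx_suml.
transitivity (\sum_i u i *m E i); last by rewrite -ue.
apply: eq_bigr => i _; rewrite mulmx_sumr (bigD1 i) //= big1 ?addr0.
  exact: eigproj_id (submxMl _ _).
by move=> j ji; apply: eigproj_eq0 (submxMl _ _); rewrite eq_sym.
Qed.

Lemma spectral_decomposition : A = \sum_i eig i *: eigproj i.
Proof.
rewrite -[LHS]mul1mx -sum_eigproj mulmx_suml.
by apply: eq_bigr => i _; rewrite eigprojA.
Qed.

Lemma vdot_eigproj (u v : 'rV[R]_n) i j :
  vdot (u *m eigproj i) (v *m eigproj j) =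
  if i == j then vdot (u *m eigproj i) v else 0.
Proof.
rewrite /vdot trmx_mul trmx_eigproj mulmxA -(mulmxA u) eigprojM.
by case: eqP => _ //; rewrite mulmx0 mul0mx mxE.
Qed.

Lemma vdot_spectral (f : 'I_r -> R) (u : 'rV[R]_n) :
  vdot (u *m \sum_i f i *: eigproj i) u =
  \sum_i f i * vdot (u *m eigproj i) (u *m eigproj i).
Proof.
rewrite mulmx_sumr vdot_suml; apply: eq_bigr => i _.
by rewrite -scalemxAr vdotZl vdot_eigproj eqxx.
Qed.

Lemma eig_extrema (u u' : 'rV[R]_n) :
  0 < vdot (u *m A) u -> vdot (u' *m A) u' < 0 ->
  exists imin imax,
    [/\ forall i, eig imin <= eig i, forall i, eig i <= eig imax,
        eig imin < 0 & 0 < eig imax].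
Proof.
rewrite spectral_decomposition !vdot_spectral => pos neg.
have r0 : (0 < r)%N.
  case: posnP pos => // r0.
  by rewrite big1 ?ltxx // => -[i ir]; exfalso; move: ir; rewrite r0.
have [imax _ maxP] := @arg_maxP _ _ _ (Ordinal r0) xpredT eig isT.
have [imin _ minP] := @arg_minP _ _ _ (Ordinal r0) xpredT eig isT.
exists imin, imax; split.
- by move=> i; exact: minP.
- by move=> i; exact: maxP.
- rewrite ltNge; apply: contraTN neg => min0; rewrite -leNgt.
  apply: sumr_ge0 => i _; apply: mulr_ge0 (vdot_ge0 _).
  exact: le_trans min0 (minP i isT).
- rewrite ltNge; apply: contraTN pos => max0; rewrite -leNgt.
  apply: sumr_le0 => i _; apply: mulr_le0_ge0 (vdot_ge0 _).
  exact: le_trans (maxP i isT) max0.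
Qed.

Definition ones_proj i : 'rV[R]_n := ones *m eigproj i.
Definition weight i : R := vdot ones (ones_proj i).
Definition W x : R := \sum_i weight i / (1 - eig i * x).
Definition dW x : R := \sum_i eig i * weight i / (1 - eig i * x) ^+ 2.
Definition nonpole x := forall i, weight i != 0 -> 1 - eig i * x != 0.
Definition pencil x : 'M[R]_n := 1%:M - x *: A.
Definition resolvent x : 'rV[R]_n := \sum_i (1 - eig i * x)^-1 *: ones_proj i.
Definition feasible v := vdot ones v = vdot v v /\ vdot (v *m A) v = 0.
Definition W_attained x := exists2 v, feasible v & vdot v v = W x.

Lemma sum_ones_proj : \sum_i ones_proj i = ones.
Proof. by rewrite -mulmx_sumr sum_eigproj mulmx1. Qed.

Lemma ones_projA i : ones_proj i *m A = eig i *: ones_proj i.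
Proof. by rewrite -mulmxA eigprojA -scalemxAr. Qed.

Lemma vdot_ones_proj i j :
  vdot (ones_proj i) (ones_proj j) = if i == j then weight i else 0.
Proof. by rewrite vdot_eigproj; case: eqP => // ->; rewrite vdotC. Qed.

Lemma weight_ge0 i : 0 <= weight i.
Proof. by have := vdot_ge0 (ones_proj i); rewrite vdot_ones_proj eqxx. Qed.

Lemma ones_proj_eq0 i : (ones_proj i == 0) = (weight i == 0).
Proof. by rewrite -vdot_eq0 vdot_ones_proj eqxx. Qed.

Lemma trmx_pencil x : (pencil x)^T = pencil x.
Proof. by rewrite /pencil linearB /= trmx1 linearZ /= symA. Qed.

Lemma pencil_spectral x : pencil x = \sum_i (1 - eig i * x) *: eigproj i.
Proof.
rewrite /pencil spectral_decomposition -sum_eigproj scaler_sumr -sumrB.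
by apply: eq_bigr => i _; rewrite scalerA scalerBl scale1r mulrC.
Qed.

Lemma vdot_pencil x (u v : 'rV[R]_n) :
  vdot (u *m pencil x) v = vdot u v - x * vdot (u *m A) v.
Proof. by rewrite /pencil mulmxBr mulmx1 -scalemxAr vdotBl vdotZl. Qed.

Lemma pencil_psd x (u : 'rV[R]_n) :
  (forall i, 0 <= 1 - eig i * x) -> 0 <= vdot (u *m pencil x) u.
Proof.
move=> psd; rewrite pencil_spectral vdot_spectral.
by apply: sumr_ge0 => i _; apply: mulr_ge0 (psd i) (vdot_ge0 _).
Qed.

Lemma ones_proj_pencil i x :
  ones_proj i *m pencil x = (1 - eig i * x) *: ones_proj i.
Proof.
by rewrite /pencil mulmxBr mulmx1 -scalemxAr ones_projA scalerA scalerBl scale1r mulrC.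
Qed.

Lemma resolventM x : nonpole x -> resolvent x *m pencil x = ones.
Proof.
move=> npx; rewrite -sum_ones_proj mulmx_suml; apply: eq_bigr => i _.
rewrite -scalemxAl ones_proj_pencil scalerA.
have [w0|w0] := eqVneq (weight i) 0; first by move/eqP: w0; rewrite -ones_proj_eq0 => /eqP ->; rewrite scaler0.
by rewrite mulVf ?scale1r ?npx.
Qed.

Lemma vdot_ones_resolvent x : vdot ones (resolvent x) = W x.
Proof. by rewrite vdot_sumr; apply: eq_bigr => i _; rewrite vdotZr mulrC. Qed.

Lemma vdot_resolventA x : vdot (resolvent x *m A) (resolvent x) = dW x.
Proof.
rewrite mulmx_suml vdot_suml; apply: eq_bigr => i _.
rewrite -scalemxAl ones_projA vdot_sumr (bigD1 i) //= big1 => [|j ji]; last first.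
  by rewrite !vdotZl vdotZr vdot_ones_proj eq_sym (negbTE ji) !mulr0.
by rewrite addr0 !vdotZl vdotZr vdot_ones_proj eqxx -exprVn expr2; ring.
Qed.

Lemma feasible_le_W x v :
  (forall i, 0 <= 1 - eig i * x) -> nonpole x -> feasible v -> vdot v v <= W x.
Proof.
move=> psd npx [Sv Qv]; have := pencil_psd (v - resolvent x) psd.
rewrite mulmxBl resolventM // vdotBl !vdotBr.
rewrite (vdot_mulmxl (pencil x) v (resolvent x)) trmx_pencil resolventM //.
rewrite vdot_pencil Qv mulr0 subr0 vdot_ones_resolvent (vdotC v ones) Sv.
lra.
Qed.

Lemma pencil_feasible x v :
  v *m pencil x = ones -> vdot (v *m A) v = 0 -> feasible v.
Proof. by move=> vM Qv; split => //; rewrite -vM vdot_pencil Qv mulr0 subr0. Qed.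

Lemma critical_W_attained x : nonpole x -> dW x = 0 -> W_attained x.
Proof.
move=> npx dW0; have Fz : feasible (resolvent x).
  by apply: (pencil_feasible (resolventM npx)); rewrite vdot_resolventA.
by exists (resolvent x) => //; rewrite -Fz.1 vdot_ones_resolvent.
Qed.

Lemma nonpole_inv_eig i0 : weight i0 = 0 -> nonpole (eig i0)^-1.
Proof.
move=> w0 i; apply: contraNN; rewrite subr_eq0 eq_sym => /eqP e1.
have L0 : eig i0 != 0 by apply: contra_eq_neq e1 => ->; rewrite invr0 mulr0 eq_sym oner_eq0.
suff /eig_inj -> : eig i = eig i0 by rewrite w0.
by rewrite -[eig i](divfK L0) e1 mul1r.
Qed.

Lemma eigenvector_ones_proj i0 i (e : 'rV[R]_n) :
  weight i0 = 0 -> e *m A = eig i0 *: e -> vdot e (ones_proj i) = 0.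
Proof.
move=> w0 eA; have [<-|i0i] := eqVneq i0 i.
  by move/eqP: w0; rewrite -ones_proj_eq0 => /eqP ->; rewrite vdot0r.
rewrite vdotC vdot_mulmxl trmx_eigproj (eigproj_eq0 i0i) ?vdot0r //.
exact/eigenspaceP.
Qed.

(* Without a pole at [x0], an eigenvector [e] of [eig i0] is orthogonal to [ones] and
   lies in the kernel of [pencil x0]; adding [t e] to the resolvent cancels [dW x0]. *)
Lemma endpoint_W_attained i0 : eig i0 != 0 -> weight i0 = 0 ->
  eig i0 * dW (eig i0)^-1 <= 0 -> W_attained (eig i0)^-1.
Proof.
move=> L0 w0 hle; set x0 := (eig i0)^-1; set z := resolvent x0.
have /eigenvalueP [e eA e0] := eigenvalue_eig i0.
have e_ones_proj i : vdot e (ones_proj i) = 0 by exact: eigenvector_ones_proj w0 eA.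
have e_ones : vdot e ones = 0.
  by rewrite -sum_ones_proj vdot_sumr big1.
have e_z : vdot e z = 0.
  by rewrite vdot_sumr big1 // => i _; rewrite vdotZr e_ones_proj mulr0.
have zAe : vdot (z *m A) e = 0.
  by rewrite vdot_mulmxl symA eA vdotZr vdotC e_z mulr0.
have eM : e *m pencil x0 = 0.
  by rewrite /pencil mulmxBr mulmx1 -scalemxAr eA scalerA mulVf // scale1r subrr.
set a := - dW x0 / (eig i0 * vdot e e).
have a0 : 0 <= a.
  rewrite (_ : a = - (eig i0 * dW x0) / (eig i0 ^+ 2 * vdot e e)); last first.
    by rewrite /a; field; rewrite vdot_eq0 e0 L0.
  by apply: divr_ge0; [rewrite oppr_ge0 | apply: mulr_ge0 (sqr_ge0 _) (vdot_ge0 _)].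
set t := Num.sqrt a; set v := z + t *: e.
have vM : v *m pencil x0 = ones.
  rewrite mulmxDl resolventM; last exact: nonpole_inv_eig.
  by rewrite -scalemxAl eM scaler0 addr0.
have Qv : vdot (v *m A) v = 0.
  rewrite mulmxDl vdotDl !vdotDr vdot_resolventA -scalemxAl eA.
  rewrite !vdotZl !vdotZr zAe e_z.
  have -> : dW x0 = - (eig i0 * vdot e e * t ^+ 2).
    by rewrite sqr_sqrtr // /a; field; rewrite vdot_eq0 e0 L0.
  by ring.
have Fv := pencil_feasible vM Qv.
exists v => //; rewrite -Fv.1 vdotDr vdot_ones_resolvent vdotZr (vdotC ones e) e_ones.
by rewrite mulr0 addr0.
Qed.

Definition dWpoly : {poly R} :=
  \sum_i (eig i * weight i) *:
    \prod_(j | (weight j != 0) && (j != i)) (1 - eig j *: 'X) ^+ 2.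

Definition pole_factor x : R := \prod_(j | weight j != 0) (1 - eig j * x) ^+ 2.

Lemma pole_factor_gt0 x : nonpole x -> 0 < pole_factor x.
Proof. by move=> npx; apply: prodr_gt0 => j wj; rewrite exprn_even_gt0 //= npx. Qed.

Lemma horner_dWpoly x : nonpole x -> dWpoly.[x] = dW x * pole_factor x.
Proof.
move=> npx; rewrite horner_sum mulr_suml; apply: eq_bigr => i _.
rewrite hornerZ horner_prod.
have [->|wi] := eqVneq (weight i) 0; first by rewrite !(mulr0, mul0r).
rewrite /pole_factor [in RHS](bigD1 i) //= mulrA divfK ?expf_neq0 ?npx //; congr (_ * _).
by apply: eq_bigr => j _; rewrite horner_sqr_linear.
Qed.

Lemma dWpoly_pole_sign i0 x :
  weight i0 != 0 -> eig i0 * x = 1 -> 0 < eig i0 * dWpoly.[x].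
Proof.
move=> wi0 Lx; have x0 : x != 0.
  by apply: contra_eq_neq Lx => ->; rewrite mulr0 eq_sym oner_eq0.
have L0 : eig i0 != 0.
  by apply: contra_eq_neq Lx => ->; rewrite mul0r eq_sym oner_eq0.
rewrite horner_sum (bigD1 i0) //= addrC big1 => [|i ii0]; last first.
  rewrite hornerZ horner_prod.
  have [->|wi] := eqVneq (weight i) 0; first by rewrite !(mulr0, mul0r).
  have i0_in : (weight i0 != 0) && (i0 != i) by rewrite wi0 eq_sym.
  by rewrite (bigD1 i0 i0_in) /= horner_sqr_linear Lx subrr expr2 !mul0r mulr0.
rewrite /= add0r hornerZ horner_prod !mulrA -expr2; apply: mulr_gt0; first apply: mulr_gt0.
- by rewrite exprn_even_gt0.
- by rewrite lt_neqAle eq_sym wi0 weight_ge0.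
apply: prodr_gt0 => j /andP [_ ji0]; rewrite horner_sqr_linear exprn_even_gt0 //=.
apply: contra ji0; rewrite subr_eq0 => /eqP jx; apply/eqP/eig_inj/(mulIf x0).
by rewrite -jx Lx.
Qed.

Lemma endpoint_alternative i0 : eig i0 != 0 ->
  (nonpole (eig i0)^-1 /\ W_attained (eig i0)^-1) \/
  0 < eig i0 * dWpoly.[(eig i0)^-1].
Proof.
move=> L0; have [w0|w0] := eqVneq (weight i0) 0; last first.
  by right; apply: dWpoly_pole_sign => //; exact: mulfV.
have npx := nonpole_inv_eig w0.
have [hle|hgt] := leP (eig i0 * dW (eig i0)^-1) 0.
  by left; split => //; exact: endpoint_W_attained.
by right; rewrite horner_dWpoly // mulrA mulr_gt0 // pole_factor_gt0.
Qed.

Lemma W_attained_between imin imax :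
  (forall i, eig imin <= eig i) -> (forall i, eig i <= eig imax) ->
  eig imin < 0 -> 0 < eig imax ->
  exists2 x, (eig imin)^-1 <= x <= (eig imax)^-1 & nonpole x /\ W_attained x.
Proof.
move=> minP maxP mn mx; have ext i : eig imin <= eig i <= eig imax by rewrite minP maxP.
 set a := (eig imin)^-1; set b := (eig imax)^-1.
have ab : a < b by apply: (@lt_trans _ _ 0); rewrite ?invr_lt0 ?invr_gt0.
have [[npa att]|ha] := endpoint_alternative (ltr0_neq0 mn).
  by exists a; rewrite ?lexx ?ltW.
have [[npb att]|hb] := endpoint_alternative (lt0r_neq0 mx).
  by exists b; rewrite ?lexx ?ltW.
rewrite nmulr_rgt0 // in ha; rewrite pmulr_rgt0 // in hb.
have hab : dWpoly.[a] * dWpoly.[b] < 0 by rewrite pmulr_llt0.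
have [x] := poly_ivtoo (ltW ab) hab.
rewrite in_itv /= => axb /rootP dW0.
have npx : nonpole x.
  by move=> i _; rewrite lt0r_neq0 // subr_gt0 (mul_lt1_between mn mx (ext i)).
exists x; first by case/andP: axb => ax xb; rewrite !ltW.
split => //; apply: critical_W_attained => //; apply/eqP.
move: dW0; rewrite horner_dWpoly // => /eqP.
by rewrite mulf_eq0 (gt_eqF (pole_factor_gt0 npx)) orbF.
Qed.

End SymmetricMatrix.

Arguments eig {R n} A i.
Arguments eigproj {R n} A i.
Arguments weight {R n} A i.

Section RealSymmetricMatrix.
Variables (R : realType) (n : nat) (A : 'M[R]_n).
Hypothesis symA : A^T = A.

Lemma dotvE (u v : 'rV[R]_n) : dotv u v = vdot u v.
Proof. by []. Qed.

Lemma quadfE v : quadf A v = vdot (v *m A) v.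
Proof. by rewrite /quadf symA vdotC. Qed.

Lemma spectrum_eig l : spectrum A l <-> exists i, l = eig A i.
Proof. by split=> [/eigenvalue_eigP //|[i ->]]; exact: eigenvalue_eig. Qed.

Lemma wcoef_eig i : wcoef A (eig A i) = weight A i.
Proof. by rewrite /wcoef -[eigenproj _ _]/(eigproj A i) trmx_eigproj. Qed.

Lemma fsbig_wcoef x :
  \sum_(l \in [set l | spectrum A l /\ wcoef A l != 0]) (wcoef A l / (1 - l * x)) =
  W A x.
Proof.
rewrite (fsbig_widen _ [set` eigs A]); last 2 first.
- by move=> l [/spectrum_eig [i ->] _]; rewrite /= mem_nth.
- move=> l [/= /[!mem_eigs] l_eig /not_andP [//|/negP]].
  by rewrite negbK => /eqP ->; rewrite mul0r.
rewrite -fsbig_seq ?uniq_roots // (big_nth 0) big_mkord.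
by apply: eq_bigr => i _; rewrite -/(eig A i) wcoef_eig.
Qed.

Lemma W_A_nonpole x : nonpole A x -> W_A A x = (W A x)%:E.
Proof.
move=> npx; rewrite /W_A; destruct pselect as [ex_pole|no_pole]; last by rewrite fsbig_wcoef.
exfalso; case: ex_pole => _ [/spectrum_eig [i ->]]; rewrite wcoef_eig => -[/npx ix0 ix].
by rewrite ix eqxx in ix0.
Qed.

Lemma W_A_pole x : ~ nonpole A x -> W_A A x = +oo%E.
Proof.
move=> pole; rewrite /W_A; destruct pselect as [ex_pole|no_pole]; first by [].
exfalso; apply: pole => i wi.
apply/eqP => ix; apply: no_pole; exists (eig A i); split; first by apply/spectrum_eig; exists i.
by rewrite wcoef_eig.
Qed.

Lemma lam_min_eig imin : (forall i, eig A imin <= eig A i) -> lam_min A = eig A imin.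
Proof.
move=> minP; have lb : lbound (spectrum A) (eig A imin) by move=> _ /spectrum_eig [i ->].
have imin_in : spectrum A (eig A imin) by apply/spectrum_eig; exists imin.
apply/eqP; rewrite eq_le; apply/andP; split.
  by apply: ge_inf => //; exists (eig A imin).
by apply: lb_le_inf => //; exists (eig A imin).
Qed.

Lemma lam_max_eig imax : (forall i, eig A i <= eig A imax) -> lam_max A = eig A imax.
Proof.
move=> maxP; have ub : ubound (spectrum A) (eig A imax) by move=> _ /spectrum_eig [i ->].
have imax_in : spectrum A (eig A imax) by apply/spectrum_eig; exists imax.
apply/eqP; rewrite eq_le; apply/andP; split.
  by apply: ge_sup => //; exists (eig A imax).
by apply: ub_le_sup => //; exists (eig A imax).
Qed.

Lemma feasible_sup_eq_inner_min : (forall i, A i i = 0) ->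
  ereal_sup [set (dotv v v)%:E | v in [set v | S_set v /\ quadf A v = 0]] =
  inner_min A.
Proof.
move=> diagA; rewrite /inner_min; case: eqP => [A0|/eqP A0].
  apply/eqP; rewrite eq_le; apply/andP; split.
    by apply: ge_ereal_sup => _ [v [Sv _] <-]; rewrite lee_fin vdot_le_dim.
  apply: ereal_sup_ubound; exists ones; last by rewrite dotvE vdot_ones_ones.
  by split => //; rewrite quadfE A0 mulmx0 vdot0l.
have [u [u' [pos neg]]] := zero_diag_quad_sign symA diagA A0.
have [imin [imax [minP maxP mn mx]]] := eig_extrema symA pos neg.
rewrite (lam_min_eig minP) (lam_max_eig maxP).
apply/eqP; rewrite eq_le; apply/andP; split.
  apply: ge_ereal_sup => _ [v [Sv Qv] <-]; apply: le_ereal_inf_tmp => _ [x x_in <-].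
  have [npx|px] := pselect (nonpole A x); last by rewrite W_A_pole // leey.
  rewrite W_A_nonpole // lee_fin; apply: (feasible_le_W symA) => //.
    by move=> i; rewrite subr_ge0 (mul_le1_between mn mx) ?minP ?maxP.
  by split; [exact: Sv | rewrite -quadfE].
have [x x_in [npx [v [Sv Qv] vW]]] := W_attained_between symA minP maxP mn mx.
apply: le_trans (_ : W_A A x <= _)%E; first by apply: ereal_inf_lbound; exists x.
rewrite W_A_nonpole // -vW; apply: ereal_sup_ubound; exists v => //.
by split; [exact: Sv | rewrite quadfE].
Qed.

End RealSymmetricMatrix.

Theorem lemma2 (R : realType) (n : nat) (adj : rel 'I_n) :
  simple_graph adj ->
  alpha_S R adj =
  ereal_inf [set inner_min A | A in [set A : 'M[R]_n | weighted_adj adj A]].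
Proof.
move=> _; rewrite /alpha_S; congr ereal_inf; apply: eq_imagel => A [symA [diagA _]].
exact: feasible_sup_eq_inner_min.
Qed.
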